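(* Let $x,y\in(0,1)$ and $n\in\mathbb{N}$. Let $X,X_1,X_2,Y,Y_1,Y_2$ be random variables with $X,X_1,X_2\sim B(n,x)$ and $Y,Y_1,Y_2\sim B(n,y)$, such that $X,Y$ are independent, $X_1,X_2$ are independent, and $Y_1,Y_2$ are independent. Then \[ F_{X+Y}\leqslant_{\mathrm{cx}}\tfrac12\bigl(F_{X_1+X_2}+F_{Y_1+Y_2}\bigr), \] i.e. $\mathbb{E}\,f(X+Y)\le \tfrac12\bigl(\mathbb{E}\,f(X_1+X_2)+\mathbb{E}\,f(Y_1+Y_2)\bigr)$ for every convex $f:\mathbb{R}\to\mathbb{R}$.
   Context: $B(n,p)$ denotes the binomial distribution with parameters $n\in\mathbb{N}$, $p\in(0,1)$: $P(X=k)=\binom nk p^k(1-p)^{n-k}$, $k=0,\dots,n$. $F_X(t)=P(X<t)$ is the distribution function of $X$. For distribution functions $G,H$ (of probability measures on $\mathbb{R}$ with finite first moment) one writes $G\leqslant_{\mathrm{cx}}H$ if $\int f\,dG\le\int f\,dH$ for all convex $f:\mathbb{R}\to\mathbb{R}$ for which the integrals exist; for random variables, $X\leqslant_{\mathrm{cx}}Y$ means $F_X\leqslant_{\mathrm{cx}}F_Y$, i.e. $\mathbb{E} f(X)\le\mathbb{E} f(Y)$ for all such convex $f$. A convex combination of distribution functions such as $\tfrac12(F_{X_1+X_2}+F_{Y_1+Y_2})$ is the distribution function of the corresponding mixture. *)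

From Stdlib Require Import Reals Lra.
Open Scope R_scope.

Definition convex (f : R -> R) : Prop :=
  forall a b t : R, 0 <= t <= 1 ->
    f (t * a + (1 - t) * b) <= t * f a + (1 - t) * f b.

Definition binom_pmf (n : nat) (p : R) (k : nat) : R :=
  C n k * p ^ k * (1 - p) ^ (n - k).

Definition E_sum_indep (n : nat) (p q : R) (f : R -> R) : R :=
  sum_f_R0 (fun k =>
    sum_f_R0 (fun l => binom_pmf n p k * binom_pmf n q l * f (INR k + INR l)) n) n.

(* Write E_p for the law of a sum of n independent Bernoulli(p) variables, seen
   as a positive linear functional on test functions, and D h := h(. + 1) - h.
   Peeling off one Bernoulli factor at a time gives E_x - E_y = (x - y) M o D
   for a positive linear functional M.  The defect
   E_x E_x + E_y E_y - 2 E_x E_y, applied to f(s + t), factors as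
   (E_x - E_y)_s (E_x - E_y)_t f(s + t) = (x - y)^2 M_s M_t D^2 f(s + t),
   which is nonnegative because D^2 f >= 0 for convex f. *)
From Stdlib Require Import Reals Lra Lia List FunctionalExtensionality.
Open Scope R_scope.

Definition linear_functional (L : (R -> R) -> R) : Prop :=
  forall g h a b, L (fun s => a * g s + b * h s) = a * L g + b * L h.

Definition positive_functional (L : (R -> R) -> R) : Prop :=
  forall g, (forall s, 0 <= g s) -> 0 <= L g.

Definition forward_diff (h : R -> R) (s : R) : R := h (s + 1) - h s.

Definition expect_sum (A B : (R -> R) -> R) (f : R -> R) : R :=
  A (fun s => B (fun t => f (s + t))).

Lemma linear_sub L g h :
  linear_functional L -> L (fun s => g s - h s) = L g - L h.
Proof.
  intros L_lin.
  replace (fun s => g s - h s) with (fun s => 1 * g s + -1 * h s)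
    by (apply functional_extensionality; intro; ring).
  rewrite L_lin; ring.
Qed.

Lemma linear_scale L c g :
  linear_functional L -> L (fun s => c * g s) = c * L g.
Proof.
  intros L_lin.
  replace (fun s => c * g s) with (fun s => c * g s + 0 * g s)
    by (apply functional_extensionality; intro; ring).
  rewrite L_lin; ring.
Qed.

Lemma convex_second_diff_nonneg f a :
  convex f -> 0 <= f (a + 2) - 2 * f (a + 1) + f a.
Proof.
  intros hf; pose proof (hf a (a + 2) (/ 2)) as H.
  replace (/ 2 * a + (1 - / 2) * (a + 2)) with (a + 1) in H by field.
  lra.
Qed.

Section ConvexOrderOfMixture.

Variables U V M : (R -> R) -> R.
Variable c : R.
Hypotheses (U_lin : linear_functional U) (V_lin : linear_functional V).
Hypotheses (M_lin : linear_functional M) (M_pos : positive_functional M).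
Hypothesis UV_comm :
  forall g : R -> R -> R,
    U (fun s => V (fun t => g s t)) = V (fun t => U (fun s => g s t)).
Hypothesis UV_sub : forall h, U h - V h = c * M (forward_diff h).

Lemma expect_sum_comm f : expect_sum U V f = expect_sum V U f.
Proof.
  unfold expect_sum; rewrite UV_comm.
  f_equal; apply functional_extensionality; intro t.
  f_equal; apply functional_extensionality; intro s.
  now rewrite Rplus_comm.
Qed.

Lemma expect_sum_mixed_le f :
  convex f -> expect_sum U V f <= / 2 * (expect_sum U U f + expect_sum V V f).
Proof.
  intros hf.
  set (K s := U (fun t => f (s + t)) - V (fun t => f (s + t))).
  set (P s := M (forward_diff (forward_diff (fun t => f (s + t))))).
  assert (defect : expect_sum U U f - expect_sum U V f
                - (expect_sum V U f - expect_sum V V f) = U K - V K).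
  { unfold expect_sum, K; rewrite !linear_sub by assumption; ring. }
  assert (diff_K : forward_diff K = (fun s => c * P s)).
  { apply functional_extensionality; intro s.
    unfold P; rewrite <- UV_sub; unfold K, forward_diff.
    rewrite !linear_sub by assumption.
    replace (fun t => f (s + 1 + t)) with (fun t => f (s + (t + 1)))
      by (apply functional_extensionality; intro t; f_equal; ring).
    ring. }
  assert (P_nonneg : forall s, 0 <= P s).
  { intro s; apply M_pos; intro t; unfold forward_diff.
    pose proof (convex_second_diff_nonneg f (s + t) hf).
    replace (s + (t + 1 + 1)) with (s + t + 2) by ring.
    replace (s + (t + 1)) with (s + t + 1) by ring.
    lra. }
  assert (MP_nonneg : 0 <= M P) by (apply M_pos; exact P_nonneg).
  assert (defect_nonneg : 0 <= U K - V K).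
  { rewrite UV_sub, diff_K, linear_scale by assumption.
    rewrite <- Rmult_assoc; apply Rmult_le_pos; [apply Rle_0_sqr | lra]. }
  rewrite <- (expect_sum_comm f) in defect; lra.
Qed.

End ConvexOrderOfMixture.

Fixpoint bernoulli_expect (ps : list R) (h : R -> R) : R :=
  match ps with
  | nil => h 0
  | p :: ps' =>
      p * bernoulli_expect ps' (fun s => h (s + 1))
      + (1 - p) * bernoulli_expect ps' h
  end.

Lemma bernoulli_expect_linear ps : linear_functional (bernoulli_expect ps).
Proof.
  induction ps as [|p ps IH]; intros g h a b; simpl; [reflexivity|].
  rewrite (IH (fun s => g (s + 1)) (fun s => h (s + 1))), IH; ring.
Qed.

Lemma bernoulli_expect_positive ps :
  Forall (fun p => 0 <= p <= 1) ps -> positive_functional (bernoulli_expect ps).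
Proof.
  induction 1 as [|p ps hp _ IH]; intros h h_nonneg; simpl; [apply h_nonneg|].
  assert (0 <= bernoulli_expect ps (fun s => h (s + 1))) by (apply IH; auto).
  assert (0 <= bernoulli_expect ps h) by (apply IH; auto).
  apply Rplus_le_le_0_compat; apply Rmult_le_pos; lra.
Qed.

Lemma bernoulli_expect_comm ps qs (g : R -> R -> R) :
  bernoulli_expect ps (fun s => bernoulli_expect qs (fun t => g s t))
  = bernoulli_expect qs (fun t => bernoulli_expect ps (fun s => g s t)).
Proof.
  revert g; induction ps as [|p ps IH]; intros g; simpl; [reflexivity|].
  rewrite (IH (fun s t => g (s + 1) t)), (IH g).
  symmetry; apply bernoulli_expect_linear.
Qed.

Lemma bernoulli_expect_repeat_positive p n :
  0 <= p <= 1 -> positive_functional (bernoulli_expect (repeat p n)).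
Proof.
  intros hp; apply bernoulli_expect_positive, Forall_forall.
  intros q hq; apply repeat_spec in hq; subst; exact hp.
Qed.

Lemma bernoulli_expect_repeat_sub x y n :
  0 <= x <= 1 -> 0 <= y <= 1 ->
  exists M, linear_functional M /\ positive_functional M /\
    forall h, bernoulli_expect (repeat x n) h - bernoulli_expect (repeat y n) h
              = (x - y) * M (forward_diff h).
Proof.
  intros hx hy.
  induction n as [|n [M [M_lin [M_pos M_sub]]]].
  - exists (fun _ => 0); repeat split.
    + intros g h a b; ring.
    + intros g _; apply Rle_refl.
    + intros h; simpl; ring.
  - (* E_{x::xs} h - E_{y::ys} h = (x - y) E_xs (D h)
         + y (E_xs - E_ys) h(. + 1) + (1 - y) (E_xs - E_ys) h *)
    exists (fun h => bernoulli_expect (repeat x n) h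
                     + y * M (fun s => h (s + 1)) + (1 - y) * M h).
    repeat split.
    + intros g h a b.
      rewrite bernoulli_expect_linear, (M_lin (fun s => g (s + 1)) (fun s => h (s + 1))), M_lin.
      ring.
    + intros g g_nonneg.
      assert (0 <= bernoulli_expect (repeat x n) g)
        by (apply bernoulli_expect_repeat_positive; auto).
      assert (0 <= M (fun s => g (s + 1))) by (apply M_pos; auto).
      assert (0 <= M g) by (apply M_pos; auto).
      assert (0 <= y * M (fun s => g (s + 1))) by (apply Rmult_le_pos; lra).
      assert (0 <= (1 - y) * M g) by (apply Rmult_le_pos; lra).
      lra.
    + intros h; simpl.
      assert (Ey : forall g, bernoulli_expect (repeat y n) g
                     = bernoulli_expect (repeat x n) g - (x - y) * M (forward_diff g))
        by (intro g; rewrite <- M_sub; ring).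
      rewrite !Ey.
      change (fun s => forward_diff h (s + 1)) with (forward_diff (fun s => h (s + 1))).
      replace (bernoulli_expect (repeat x n) (forward_diff h))
        with (bernoulli_expect (repeat x n) (fun s => h (s + 1))
              - bernoulli_expect (repeat x n) h)
        by (symmetry; apply linear_sub, bernoulli_expect_linear).
      ring.
Qed.

Lemma C_n_0 n : C n 0 = 1.
Proof. unfold C; rewrite Nat.sub_0_r; simpl; field; apply INR_fact_neq_0. Qed.

Lemma C_n_n n : C n n = 1.
Proof. unfold C; rewrite Nat.sub_diag; simpl; field; apply INR_fact_neq_0. Qed.

(* [binom_pmf n p k] is not 0 for k > n ([C n k] is then 1), so pad it by hand
   to get Pascal's rule for every k. *)
Definition binom_weight (n : nat) (p : R) (k : nat) : R :=
  if (k <=? n)%nat then binom_pmf n p k else 0.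

Lemma binom_weight_le n p k : (k <= n)%nat -> binom_weight n p k = binom_pmf n p k.
Proof. intros hk; unfold binom_weight; now rewrite (proj2 (Nat.leb_le k n) hk). Qed.

Lemma binom_weight_gt n p k : (n < k)%nat -> binom_weight n p k = 0.
Proof. intros hk; unfold binom_weight; now rewrite (proj2 (Nat.leb_gt k n) hk). Qed.

Lemma binom_weight_S_0 n p : binom_weight (S n) p 0 = (1 - p) * binom_weight n p 0.
Proof.
  rewrite !binom_weight_le by lia; unfold binom_pmf.
  rewrite !C_n_0, !Nat.sub_0_r; simpl; ring.
Qed.

Lemma binom_weight_S_S n p k :
  binom_weight (S n) p (S k) = p * binom_weight n p k + (1 - p) * binom_weight n p (S k).
Proof.
  destruct (Compare_dec.lt_eq_lt_dec k n) as [[hk | <-] | hk].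
  - rewrite !binom_weight_le by lia; unfold binom_pmf.
    rewrite <- (pascal n k hk).
    replace (S n - S k)%nat with (S (n - S k)) by lia.
    replace (n - k)%nat with (S (n - S k)) by lia.
    simpl; ring.
  - rewrite (binom_weight_gt k p (S k)), !binom_weight_le by lia; unfold binom_pmf.
    rewrite !C_n_n, !Nat.sub_diag; simpl; ring.
  - rewrite !binom_weight_gt by lia; ring.
Qed.

Lemma bernoulli_expect_repeat_weight n p h :
  bernoulli_expect (repeat p n) h
  = sum_f_R0 (fun k => binom_weight n p k * h (INR k)) (S n).
Proof.
  revert h; induction n as [|n IH]; intros h.
  - simpl; rewrite (binom_weight_gt 0 p 1), binom_weight_le by lia.
    unfold binom_pmf; rewrite C_n_0; simpl; ring.
  - change (bernoulli_expect (repeat p (S n)) h) with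
      (p * bernoulli_expect (repeat p n) (fun s => h (s + 1))
       + (1 - p) * bernoulli_expect (repeat p n) h).
    rewrite !IH.
    rewrite (decomp_sum _ (S (S n))) by lia.
    rewrite (decomp_sum (fun k => binom_weight n p k * h (INR k)) (S n)) by lia.
    simpl pred; rewrite binom_weight_S_0.
    rewrite (sum_eq (fun i => binom_weight (S n) p (S i) * h (INR (S i))) (fun i => binom_weight n p i * h (INR i + 1) * p
                + binom_weight n p (S i) * h (INR (S i)) * (1 - p)))
      by (intros i _; rewrite binom_weight_S_S, S_INR; ring).
    rewrite sum_plus, <- !scal_sum.
    change (sum_f_R0 (fun i => binom_weight n p (S i) * h (INR (S i))) (S n))
      with (sum_f_R0 (fun i => binom_weight n p (S i) * h (INR (S i))) n
            + binom_weight n p (S (S n)) * h (INR (S (S n)))).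
    rewrite (binom_weight_gt n p (S (S n))) by lia.
    ring.
Qed.

Lemma bernoulli_expect_repeat n p h :
  bernoulli_expect (repeat p n) h = sum_f_R0 (fun k => binom_pmf n p k * h (INR k)) n.
Proof.
  rewrite bernoulli_expect_repeat_weight; simpl sum_f_R0 at 1.
  rewrite (binom_weight_gt n p (S n)), Rmult_0_l, Rplus_0_r by lia.
  apply sum_eq; intros k hk; now rewrite binom_weight_le.
Qed.

Lemma E_sum_indep_expect_sum n p q f :
  E_sum_indep n p q f
  = expect_sum (bernoulli_expect (repeat p n)) (bernoulli_expect (repeat q n)) f.
Proof.
  unfold E_sum_indep, expect_sum; rewrite bernoulli_expect_repeat.
  apply sum_eq; intros k _.
  rewrite bernoulli_expect_repeat, scal_sum.
  apply sum_eq; intros l _; ring.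
Qed.

Theorem theorem2 (x y : R) (n : nat) (hx : 0 < x < 1) (hy : 0 < y < 1)
  (f : R -> R) (hf : convex f) :
  E_sum_indep n x y f <= / 2 * (E_sum_indep n x x f + E_sum_indep n y y f).
Proof.
  destruct (bernoulli_expect_repeat_sub x y n) as (M & M_lin & M_pos & M_sub); try lra.
  rewrite !E_sum_indep_expect_sum.
  apply (expect_sum_mixed_le _ _ M (x - y)); auto using bernoulli_expect_linear.
  intros g; apply bernoulli_expect_comm.
Qed.
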